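(* Let $m\ge1$, $n\ge1$, $N>2n$, let $\Sigma_0,\dots,\Sigma_n\in\mathbb R^{m\times m}$, and let $\mathbf T_n$ be the $(n+1)m\times(n+1)m$ block-Toeplitz matrix whose $(i,j)$ block ($i,j=0,\dots,n$) is $\Sigma_{i-j}$ if $i\ge j$ and $\Sigma_{j-i}^\top$ if $i<j$. Consider the maximum entropy problem (MEP): minimize $-\log\det\boldsymbol\Sigma$ over symmetric positive definite $mN\times mN$ matrices $\boldsymbol\Sigma$ subject to $E_n^\top\boldsymbol\Sigma E_n=\mathbf T_n$ and $\mathbf U_N^\top\boldsymbol\Sigma\mathbf U_N=\boldsymbol\Sigma$. Let $\boldsymbol\Sigma^o_N$ be a minimizer of (MEP). Then $(\boldsymbol\Sigma^o_N)^{-1}$ is a symmetric block-circulant matrix which is banded of bandwidth $n$. Hence $\boldsymbol\Sigma_N^o$ is the covariance matrix of a stationary reciprocal process of order $n$ on $\mathbb Z_N$.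
   Context: $E_n$ is the $mN\times m(n+1)$ matrix consisting of $N\times(n+1)$ blocks of size $m\times m$ whose $(i,i)$ blocks ($i=1,\dots,n+1$) are $I_m$ and all other blocks are $0$; thus $E_n^\top\boldsymbol\Sigma E_n$ is the upper-left $(n+1)\times(n+1)$ block corner of $\boldsymbol\Sigma$. $\mathbf U_N$ is the $mN\times mN$ block-circulant shift matrix whose $(i,i+1)$ blocks ($i=1,\dots,N-1$) and $(N,1)$ block equal $I_m$ and all other blocks are $0$; a matrix $\boldsymbol\Sigma$ is block-circulant (its $(i,j)$ block depends only on $(i-j)\bmod N$) iff $\mathbf U_N^\top\boldsymbol\Sigma\mathbf U_N=\boldsymbol\Sigma$. A block-circulant matrix is banded of bandwidth $n$ if its $(i,j)$ block is zero whenever the cyclic distance $\min\{(i-j)\bmod N,(j-i)\bmod N\}$ exceeds $n$. A process on $\mathbb Z_N$ is an $m$-dimensional zero-mean second-order process $\{\mathbf y(t)\}_{t=1}^N$ with time indices taken mod $N$ and symmetric block-circulant covariance $\mathbb E\,\mathbf y\mathbf y^\top$ (such a process is called stationary). Writing $\hat{\mathbb E}[\cdot\mid\cdot]$ for orthogonal projection onto the closed linear span of the scalar components of the conditioning variables, subspaces $\mathcal A,\mathcal B$ are conditionally orthogonal given $\mathcal C$ if $(a-\hat{\mathbb E}[a\mid\mathcal C])$ and $(b-\hat{\mathbb E}[b\mid\mathcal C])$ are uncorrelated for all $a\in\mathcal A,b\in\mathcal B$. The process is reciprocal of order $n$ if for every (cyclic) interval $(t_1,t_2)$ the variables $\{\mathbf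 y(t):t\in(t_1,t_2)\}$ are conditionally orthogonal to $\{\mathbf y(s): s\notin(t_1,t_2)\}$ given $\mathbf y(t_1-n+1),\dots,\mathbf y(t_1),\mathbf y(t_2),\dots,\mathbf y(t_2+n-1)$. *)

From HB Require Import structures.
From mathcomp Require Import all_boot all_order all_algebra.
From mathcomp Require Import reals exp.
Set Implicit Arguments. Unset Strict Implicit. Unset Printing Implicit Defensive.
Import Order.TTheory GRing.Theory Num.Theory.
Local Open Scope ring_scope.

(* Scalar index k : 'I_(m*N) lies in block (time) k %/ m, at position k %% m.
   Blocks / times are numbered 0..N-1 (the paper's 1..N shifted by one). *)

Section Defs.
Variable R : realType.

Definition posdef (k : nat) (A : 'M[R]_k) : Prop :=
  A^T = A /\ forall x : 'cV[R]_k, x != 0 -> 0 < (x^T *m A *m x) 0 0.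

Definition Emat (m n N : nat) : 'M[R]_(m * N, m * n.+1) :=
  \matrix_(k, l) ((nat_of_ord k == nat_of_ord l)%:R).

(* U_N : block-circulant shift, (i,i+1) blocks and (N,1) block = I_m *)
Definition Umat (m N : nat) : 'M[R]_(m * N) :=
  \matrix_(k, l) (((k %% m == l %% m) && (l %/ m == (k %/ m).+1 %% N))%N%:R).

Definition Tmat (m n : nat) (S : nat -> 'M[R]_m) : 'M[R]_(m * n.+1) :=
  \matrix_(k, l)
    (let i := (k %/ m)%N in let j := (l %/ m)%N in
     let a := (k %% m)%N in let b := (l %% m)%N in
     match ltnP a m, ltnP b m with
     | LtnNotGeq ha, LtnNotGeq hb =>
         if (j <= i)%N then S (i - j)%N (Ordinal ha) (Ordinal hb)
         else S (j - i)%N (Ordinal hb) (Ordinal ha)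
     | _, _ => 0
     end).

Definition cdist (N i j : nat) : nat :=
  minn ((i + N - j) %% N) ((j + N - i) %% N).

Definition banded (m N n : nat) (A : 'M[R]_(m * N)) : Prop :=
  forall k l : 'I_(m * N), (n < cdist N (k %/ m) (l %/ m))%N -> A k l = 0.

(* Second-order process y with covariance Sig: the scalar random variable
   c^T y is identified with the coefficient vector c, and E[(c^T y)(d^T y)]
   = c^T Sig d. *)
Definition inner (k : nat) (Sig : 'M[R]_k) (c d : 'cV[R]_k) : R :=
  (c^T *m Sig *m d) 0 0.

(* c lies in the span of the components of y(t), t in P *)
Definition supp (m N : nat) (P : pred nat) (c : 'cV[R]_(m * N)) : Prop :=
  forall k : 'I_(m * N), c k 0 != 0 -> P (k %/ m)%N.

(* conditional orthogonality of span{y(t): t in A}, span{y(t): t in B}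
   given span{y(t) : t in C}; pa, pb are the orthogonal projections of a, b
   onto span C (characterized as elements of span C with residual orthogonal
   to span C). *)
Definition condorth (m N : nat) (Sig : 'M[R]_(m * N)) (A B C : pred nat) : Prop :=
  forall a b pa pb : 'cV[R]_(m * N),
    supp A a -> supp B b -> supp C pa -> supp C pb ->
    (forall c, supp C c -> inner Sig (a - pa) c = 0) ->
    (forall c, supp C c -> inner Sig (b - pb) c = 0) ->
    inner Sig (a - pa) (b - pb) = 0.

Definition in_interval (N t1 t2 : nat) : pred nat :=
  fun t => (t < N)%N && (0 < (t + N - t1) %% N < (t2 + N - t1) %% N)%N.

Definition outside_interval (N t1 t2 : nat) : pred nat :=
  fun t => (t < N)%N && ~~ in_interval N t1 t2 t.

(* t1-n+1, ..., t1, t2, ..., t2+n-1 (mod N) *)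
Definition boundary (N n t1 t2 : nat) : pred nat :=
  fun t => (t < N)%N && (((t1 + N - t) %% N < n) || ((t + N - t2) %% N < n))%N.

Definition reciprocal (m N n : nat) (Sig : 'M[R]_(m * N)) : Prop :=
  forall t1 t2 : nat, (t1 < N)%N -> (t2 < N)%N ->
    condorth Sig (in_interval N t1 t2) (outside_interval N t1 t2)
      (boundary N n t1 t2).

Definition MEP_feasible (m n N : nat) (S : nat -> 'M[R]_m)
    (Sig : 'M[R]_(m * N)) : Prop :=
  posdef Sig /\ (Emat m n N)^T *m Sig *m Emat m n N = Tmat n S /\
  (Umat m N)^T *m Sig *m Umat m N = Sig.

Definition MEP_minimizer (m n N : nat) (S : nat -> 'M[R]_m)
    (Sig : 'M[R]_(m * N)) : Prop :=
  MEP_feasible n S Sig /\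
  forall Sig' : 'M[R]_(m * N), MEP_feasible n S Sig' ->
    - ln (\det Sig) <= - ln (\det Sig').

End Defs.

Arguments posdef {R k} A.
Arguments Emat {R} m n N.
Arguments Umat {R} m N.
Arguments Tmat {R m} n S.
Arguments banded {R} m N n A.
Arguments inner {R k} Sig c d.
Arguments supp {R m N} P c.
Arguments condorth {R m N} Sig A B C.
Arguments reciprocal {R} m N n Sig.
Arguments MEP_feasible {R} m n N S Sig.
Arguments MEP_minimizer {R} m n N S Sig.

(* At a minimizer [Sig] of [- log det], every direction [D] that is symmetric,
   block-circulant and vanishes on the prescribed (n+1) x (n+1) block corner keeps
   [Sig + t D] feasible for small [t], so the first variation [tr (Sig^-1 D)] vanishes.
   For a pair of indices at cyclic block distance [> n], the symmetrized indicator of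
   its orbit under the block shift is such a direction (this is where [2 n < N] is
   needed), and since [Sig^-1] is symmetric and block-circulant the trace is a positive
   multiple of the corresponding entry of [Sig^-1]. *)

From HB Require Import structures.
From mathcomp Require Import all_boot all_order all_algebra.
From mathcomp Require Import reals exp.
From mathcomp Require Import fingroup perm ring lra zify.
Set Implicit Arguments. Unset Strict Implicit. Unset Printing Implicit Defensive.
Import Order.TTheory GRing.Theory Num.Theory.
Local Open Scope ring_scope.

Section QuadraticForms.
Variable R : realType.
Implicit Types (k : nat).

Lemma innerE k (A : 'M[R]_k) x y :
  inner A x y = \sum_i \sum_j x i 0 * A i j * y j 0.
Proof.
rewrite /inner mxE exchange_big /=; apply: eq_bigr => j _.
by rewrite mxE mulr_suml; apply: eq_bigr => i _; rewrite !mxE.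
Qed.

Lemma inner_sym k (A : 'M[R]_k) x y : A^T = A -> inner A x y = inner A y x.
Proof.
move=> sA; rewrite /inner -[in RHS](trmxK x) -[in RHS]sA -!trmx_mul mulmxA.
by rewrite [RHS]mxE.
Qed.

Lemma inner_mulmx k (A B C : 'M[R]_k) x y :
  inner A (B *m x) (C *m y) = inner (B^T *m A *m C) x y.
Proof. by rewrite /inner trmx_mul !mulmxA. Qed.

Lemma innerDl k (A : 'M[R]_k) x y z : inner A (x + y) z = inner A x z + inner A y z.
Proof. by rewrite /inner linearD /= !mulmxDl mxE. Qed.

Lemma innerDr k (A : 'M[R]_k) x y z : inner A z (x + y) = inner A z x + inner A z y.
Proof. by rewrite /inner mulmxDr mxE. Qed.

Lemma innerZl k (A : 'M[R]_k) a x z : inner A (a *: x) z = a * inner A x z.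
Proof. by rewrite /inner linearZ /= -!scalemxAl mxE. Qed.

Lemma innerZr k (A : 'M[R]_k) a x z : inner A z (a *: x) = a * inner A z x.
Proof. by rewrite /inner -!scalemxAr mxE. Qed.

Lemma innerNl k (A : 'M[R]_k) x z : inner A (- x) z = - inner A x z.
Proof. by rewrite -scaleN1r innerZl mulN1r. Qed.

Lemma innerNr k (A : 'M[R]_k) x z : inner A z (- x) = - inner A z x.
Proof. by rewrite -scaleN1r innerZr mulN1r. Qed.

Lemma inner_addmx k (A B : 'M[R]_k) x z :
  inner (A + B) x z = inner A x z + inner B x z.
Proof. by rewrite /inner mulmxDr mulmxDl mxE. Qed.

Lemma inner_scalemx k (A : 'M[R]_k) a x z : inner (a *: A) x z = a * inner A x z.
Proof. by rewrite /inner -scalemxAr -scalemxAl mxE. Qed.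

Lemma inner0r k (A : 'M[R]_k) x : inner A x 0 = 0.
Proof. by rewrite /inner mulmx0 mxE. Qed.

Lemma cauchy_schwarz k (A : 'M[R]_k) u v : A^T = A ->
  (forall x, 0 <= inner A x x) -> 0 < inner A v v ->
  inner A u v ^+ 2 <= inner A u u * inner A v v.
Proof.
move=> sA psdA c_gt0; set c := inner A v v in c_gt0 *.
have := psdA (u - (inner A u v / c) *: v).
rewrite innerDl !innerDr !innerNl !innerNr !innerZl !innerZr (inner_sym v u sA) -/c.
move: (inner A u u) (inner A u v) => a b.
have -> : a - b / c * b + (- (b / c * b) - - (b / c * (b / c * c))) = (a * c - b ^+ 2) / c.
  by field; rewrite gt_eqF.
by rewrite pmulr_lge0 ?invr_gt0 // subr_ge0.
Qed.

Definition sqnorm k (x : 'cV[R]_k) : R := inner 1%:M x x.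

Lemma sqnormE k (x : 'cV[R]_k) : sqnorm x = \sum_i x i 0 ^+ 2.
Proof.
rewrite /sqnorm innerE; apply: eq_bigr => i _.
rewrite (bigD1 i) //= big1 ?addr0; first by rewrite !mxE eqxx mulr1 expr2.
by move=> j ji; rewrite !mxE eq_sym (negPf ji) mulr0 mul0r.
Qed.

Lemma sqr_coord_le_sqnorm k (x : 'cV[R]_k) i : x i 0 ^+ 2 <= sqnorm x.
Proof.
by rewrite sqnormE (bigD1 i) //= lerDl sumr_ge0 // => j _; apply: sqr_ge0.
Qed.

Lemma sqnorm_gt0 k (x : 'cV[R]_k) : x != 0 -> 0 < sqnorm x.
Proof.
move=> nx; have [i xi] : exists i, x i 0 != 0.
  apply/existsP; apply: contraNT nx; rewrite negb_exists => /forallP x0.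
  by apply/eqP/matrixP => i j; rewrite (ord1 j) mxE; apply/eqP/negbNE/x0.
by apply: lt_le_trans (sqr_coord_le_sqnorm x i); rewrite exprn_even_gt0 //= xi.
Qed.

Definition mxnorm_l1 k (A : 'M[R]_k) : R := \sum_i \sum_j `|A i j|.

Lemma mxnorm_l1_ge0 k (A : 'M[R]_k) : 0 <= mxnorm_l1 A.
Proof. by apply: sumr_ge0 => i _; apply: sumr_ge0. Qed.

Lemma norm_inner_le k (A : 'M[R]_k) x : `|inner A x x| <= mxnorm_l1 A * sqnorm x.
Proof.
rewrite innerE mulr_suml; apply: le_trans (ler_norm_sum _ _ _) _.
apply: ler_sum => i _; rewrite mulr_suml.
apply: le_trans (ler_norm_sum _ _ _) _; apply: ler_sum => j _.
rewrite !normrM [`|x i 0| * _]mulrC -mulrA ler_wpM2l //.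
have := sqr_coord_le_sqnorm x i; have := sqr_coord_le_sqnorm x j.
rewrite -[x i 0 ^+ 2]real_normK ?num_real // -[x j 0 ^+ 2]real_normK ?num_real //.
have := normr_ge0 (x i 0); have := normr_ge0 (x j 0); nra.
Qed.

Lemma posdef_ge0 k (A : 'M[R]_k) x : posdef A -> 0 <= inner A x x.
Proof.
by case=> _ pA; have [->|/pA/ltW//] := eqVneq x 0; rewrite inner0r.
Qed.

Lemma posdef_unit k (A : 'M[R]_k) : posdef A -> A \in unitmx.
Proof.
move=> [_ pA]; rewrite unitmxE unitfE; apply/negP => /det0P [v nv vA].
have /pA : v^T != 0 by rewrite -(inj_eq (@trmx_inj _ _ _)) trmxK linear0.
by rewrite trmxK vA mul0mx mxE ltxx.
Qed.

Lemma posdef_invmx k (A : 'M[R]_k) : posdef A -> posdef (invmx A).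
Proof.
move=> pA; have uA := posdef_unit pA; case: pA => sA pA.
split; first by rewrite trmx_inv sA.
move=> x nx; have /pA : invmx A *m x != 0.
  by apply: contra nx => /eqP Kx0; rewrite -(mulKVmx uA x) Kx0 mulmx0.
by rewrite -/(inner _ _ _) inner_mulmx trmx_inv sA mulVmx ?mul1mx.
Qed.

Lemma inner_mulmxr k (A : 'M[R]_k) x y : inner A x y = \sum_i x i 0 * (A *m y) i 0.
Proof. by rewrite /inner -mulmxA mxE; apply: eq_bigr => i _; rewrite mxE. Qed.

Lemma posdef_restrict_eq0 k (K : 'M[R]_k) (P : pred 'I_k) (v : 'cV[R]_k) :
  posdef K ->
  (forall i j, P i -> ~~ P j -> K i j * v j 0 = 0) ->
  (forall i, P i -> (K *m v) i 0 = 0) -> forall i, P i -> v i 0 = 0.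
Proof.
move=> [_ pK] Kout Kv0; pose w : 'cV[R]_k := \col_i (if P i then v i 0 else 0).
have Kw0 i : P i -> (K *m w) i 0 = 0.
  move=> Pi; rewrite -(Kv0 i Pi) !mxE; apply: eq_bigr => j _; rewrite mxE.
  by case: ifPn => // Pj; rewrite Kout ?mulr0.
suff /eqP/matrixP w0 : w == 0 by move=> i Pi; have := w0 i 0; rewrite !mxE Pi.
apply: contraT => /pK; rewrite -/(inner _ _ _) inner_mulmxr big1 ?ltxx // => i _.
by rewrite mxE; case: ifPn => [/Kw0 ->|]; rewrite ?mulr0 ?mul0r.
Qed.

(* Cauchy-Schwarz for the form of [A], applied to [x] and [A^-1 x]. *)
Lemma sqnorm_le_inner k (A : 'M[R]_k) x : posdef A ->
  sqnorm x <= inner A x x * mxnorm_l1 (invmx A).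
Proof.
move=> pA; have [->|nx] := eqVneq x 0; first by rewrite /sqnorm !inner0r mul0r.
have uA := posdef_unit pA; have [sA _] := pA.
have xKx : inner A x (invmx A *m x) = sqnorm x.
  by rewrite -[x in inner A x]mul1mx inner_mulmx trmx1 mul1mx mulmxV.
have KxKx : inner A (invmx A *m x) (invmx A *m x) = inner (invmx A) x x.
  by rewrite inner_mulmx trmx_inv sA mulVmx ?mul1mx.
have := cauchy_schwarz x (v := invmx A *m x) sA (fun y => posdef_ge0 y pA).
rewrite xKx KxKx => /(_ (proj2 (posdef_invmx pA) x nx)) cs.
have Kbound := le_trans (ler_norm _) (norm_inner_le (invmx A) x).
have n0 := sqnorm_gt0 nx; have := posdef_ge0 x pA.
have := mxnorm_l1_ge0 (invmx A); nra.
Qed.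

Lemma posdef_perturb k (A D : 'M[R]_k) : posdef A -> D^T = D ->
  exists2 d : R, 0 < d & forall t, `|t| < d -> posdef (A + t *: D).
Proof.
move=> pA Dsym; have [Asym Apos] := pA.
set CA := mxnorm_l1 (invmx A); set CD := mxnorm_l1 D.
have CA0 : 0 <= CA := mxnorm_l1_ge0 _; have CD0 : 0 <= CD := mxnorm_l1_ge0 _.
exists (CA * CD + 1)^-1; first by rewrite invr_gt0; nra.
move=> t t_small; split; first by rewrite linearD /= linearZ /= Asym Dsym.
move=> x nx; rewrite -/(inner _ x x) inner_addmx inner_scalemx.
have xAx : 0 < inner A x x := Apos x nx.
have tCACD : `|t| * (CA * CD) < 1.
  move: t_small; rewrite -[(_ + 1)^-1]div1r ltr_pdivlMr; last by nra.
  by have := normr_ge0 t; nra.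
have tDx : `|t * inner D x x| <= `|t| * CD * (inner A x x * CA).
  rewrite normrM -mulrA ler_wpM2l // (le_trans (norm_inner_le D x)) //.
  by rewrite ler_wpM2l // sqnorm_le_inner.
move: tDx; rewrite ler_norml => /andP[tDx _].
have : 0 < inner A x x * (1 - `|t| * (CA * CD)) by rewrite mulr_gt0 // subr_gt0.
nra.
Qed.

End QuadraticForms.

Section DetPencil.
Variable F : fieldType.

Lemma horner_char_poly d (A : 'M[F]_d) x : (char_poly A).[x] = \det (x%:M - A).
Proof.
have <- : map_mx (horner_eval x) (char_poly_mx A) = x%:M - A.
  apply/matrixP => i j; rewrite !mxE /horner_eval.
  by rewrite hornerD hornerN hornerMn hornerX hornerC.
by rewrite det_map_mx.
Qed.

Lemma char_poly_coef_deg d (A : 'M[F]_d) : (char_poly A)`_d = 1.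
Proof.
by have /monicP := char_poly_monic A; rewrite lead_coefE size_char_poly.
Qed.

(* [det (1 + t M) = t^d * char_poly (- M) (t^-1)]: the coefficients of [char_poly (- M)]
   in reverse order. *)
Definition det_pencil d (M : 'M[F]_d) : {poly F} :=
  \poly_(i < d.+1) (char_poly (- M))`_(d - i).

Lemma horner_det_pencil d (M : 'M[F]_d) t :
  (det_pencil M).[t] = \det (1%:M + t *: M).
Proof.
rewrite (horner_coef_wide t (size_poly _ _)).
under eq_bigr do rewrite coef_poly ltn_ord.
have [->|t0] := eqVneq t 0.
  rewrite scale0r addr0 det1 big_ord_recl subn0 expr0 mulr1 big1 ?addr0.
    exact: char_poly_coef_deg.
  by move=> i _; rewrite expr0n mulr0.
have -> : 1%:M + t *: M = t *: (t^-1%:M - - M).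
  by rewrite opprK scalerDr scale_scalar_mx mulfV.
rewrite detZ -horner_char_poly.
rewrite (horner_coef_wide _ (eq_leq (size_char_poly _))).
rewrite mulr_sumr (reindex_inj rev_ord_inj) /=; apply: eq_bigr => i _.
have id : (i <= d)%N by rewrite -ltnS.
rewrite subKn // mulrCA; congr (_ * _).
by rewrite subSS exprVn -[in t ^+ d](subnK id) exprD mulfK // expf_neq0.
Qed.

Lemma det_pencil_coef0 d (M : 'M[F]_d) : (det_pencil M)`_0 = 1.
Proof. by rewrite coef_poly subn0 char_poly_coef_deg. Qed.

Lemma det_pencil_coef1 d (M : 'M[F]_d) : (0 < d)%N -> (det_pencil M)`_1 = \tr M.
Proof.
by move=> d0; rewrite coef_poly ltnS d0 subn1 char_poly_trace // raddfN opprK.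
Qed.

End DetPencil.

Section PolyLocalMax.
Variable R : realFieldType.

Lemma norm_horner_le (p : {poly R}) t :
  `|t| <= 1 -> `|p.[t]| <= \sum_(i < size p) `|p`_i|.
Proof.
move=> t1; rewrite horner_coef; apply: le_trans (ler_norm_sum _ _ _) _.
by apply: ler_sum => i _; rewrite normrM normrX ler_piMr // exprn_ile1.
Qed.

Lemma poly_taylor1 (p : {poly R}) : exists2 B : R, 0 <= B &
  forall t, `|t| <= 1 -> `|p.[t] - p`_0 - p`_1 * t| <= B * t ^+ 2.
Proof.
set q := drop_poly 2 p.
exists (\sum_(i < size q) `|q`_i|); first by apply: sumr_ge0.
move=> t t1; rewrite -{1}(poly_take_drop 2 p) hornerD hornerM hornerXn -/q.
rewrite (horner_coef_wide _ (size_take_poly 2 p)) !big_ord_recl big_ord0.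
rewrite /= !coef_take_poly /= expr0 mulr1 expr1 addr0.
rewrite [X in `|X|](_ : _ = q.[t] * t ^+ 2); last by rewrite /bump /=; ring.
rewrite normrM normrX real_normK ?num_real //.
by rewrite ler_wpM2r ?sqr_ge0 // norm_horner_le.
Qed.

Lemma coef1_eq0_at_local_max0 (p : {poly R}) (d : R) : 0 < d ->
  (forall t, `|t| < d -> p.[t] <= p`_0) -> p`_1 = 0.
Proof.
move=> d0 pmax; have [B B0 hB] := poly_taylor1 p.
set a := p`_1 in hB *; apply/eqP; apply: contraT => a0.
have a2 : 0 < a ^+ 2 by rewrite exprn_even_gt0.
pose c := Num.min d 1; pose e := c / ((`|a| + 1) * (B + 1)).
have c0 : 0 < c by rewrite lt_min d0 ltr01.
have [cd c1] : c <= d /\ c <= 1 by split; rewrite ge_min lexx ?orbT.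
have k0 : 0 < (`|a| + 1) * (B + 1) by have := normr_ge0 a; nra.
have ce : e * ((`|a| + 1) * (B + 1)) = c by rewrite mulfVK // gt_eqF.
have e0 : 0 < e by rewrite divr_gt0.
have ae : `|a * e| < c.
  by rewrite normrM (gtr0_norm e0) -ce mulrC ltr_pM2l //; have := normr_ge0 a; nra.
have Be : B * e < 1.
  apply: lt_le_trans c1; rewrite -ce mulrC ltr_pM2l //.
  by have := normr_ge0 a; nra.
have := pmax (a * e) (lt_le_trans ae cd).
have := hB (a * e) (ltW (lt_le_trans ae c1)).
rewrite ler_norml => /andP[lo _] hi.
have q0 : 0 < a ^+ 2 * e * (1 - B * e).
  by apply: mulr_gt0; [exact: mulr_gt0 | rewrite subr_gt0].
have : a ^+ 2 * e * (1 - B * e) <= 0 by rewrite !expr2 in a2 lo *; nra.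
by rewrite leNgt q0.
Qed.

End PolyLocalMax.

Section DetOptimality.
Variable R : realType.

(* [det] cannot vanish along the segment from [1] to [A], all of whose points are
   positive definite. *)
Lemma posdef_det_gt0 d (A : 'M[R]_d) : posdef A -> 0 < \det A.
Proof.
move=> pA; have [sA pA'] := pA.
have det_neq0 : \det A != 0 by rewrite -unitfE -unitmxE posdef_unit.
rewrite lt_def det_neq0 leNgt; apply/negP => det_lt0.
have [x /andP[x0 x1]] : exists2 x, 0 <= x <= 1 & root (- det_pencil (A - 1%:M)) x.
  apply: poly_ivt; first exact: ler01.
  rewrite !hornerN !horner_det_pencil scale0r addr0 det1 scale1r addrC subrK.
  by rewrite oppr_le0 ler01 oppr_ge0 ltW.
rewrite /root hornerN oppr_eq0 horner_det_pencil => /eqP det0.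
suff /posdef_unit : posdef (1%:M + x *: (A - 1%:M)) by rewrite unitmxE unitfE det0 eqxx.
split.
  by rewrite linearD /= linearZ /= linearB /= sA trmx1.
move=> v nv; rewrite -/(inner _ v v) inner_addmx inner_scalemx.
rewrite -[A - 1%:M]/(A + - 1%:M) inner_addmx -scaleN1r inner_scalemx -/(sqnorm v).
have := pA' v nv; have := sqnorm_gt0 nv; rewrite -/(inner A v v); nra.
Qed.

(* [det (S + t D) = det S * det (1 + t S^-1 D)], whose coefficient of [t] is the trace. *)
Lemma det_local_max_trace k (S D : 'M[R]_k) (d : R) : (0 < k)%N -> posdef S -> 0 < d ->
  (forall t, `|t| < d -> \det (S + t *: D) <= \det S) ->
  \tr (invmx S *m D) = 0.
Proof.
move=> k0 pS d0 Smax; have uS := posdef_unit pS.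
rewrite -(det_pencil_coef1 _ k0); apply: (coef1_eq0_at_local_max0 d0) => t /Smax.
have -> : S + t *: D = S *m (1%:M + t *: (invmx S *m D)).
  by rewrite mulmxDr mulmx1 -scalemxAr mulmxA mulmxV // mul1mx.
rewrite det_mulmx -horner_det_pencil det_pencil_coef0 -{2}[\det S]mulr1.
by rewrite ler_pM2l // posdef_det_gt0.
Qed.

End DetOptimality.

Lemma trmx_conj_invmx (R : comUnitRingType) k (P S : 'M[R]_k) :
  P^T *m P = 1%:M -> S \in unitmx -> P^T *m S *m P = S ->
  P^T *m invmx S *m P = invmx S.
Proof.
move=> PtP uS PSP; have PPt := mulmx1C PtP.
have inv : (P^T *m invmx S *m P) *m S = 1%:M.
  rewrite -{2}PSP !mulmxA -(mulmxA _ P) PPt mulmx1 -(mulmxA _ (invmx S)).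
  by rewrite mulVmx // mulmx1.
by rewrite -[LHS]mulmx1 -(mulmxV uS) mulmxA inv mul1mx.
Qed.

Definition lag (N a b : nat) : nat := ((b + N - a) %% N)%N.

Section Lag.
Local Open Scope nat_scope.
Variable N : nat.
Hypothesis N_gt0 : 0 < N.

Lemma lag_lt a b : lag N a b < N.
Proof. exact: ltn_pmod. Qed.

Lemma lagnn a : lag N a a = 0.
Proof. by rewrite /lag addKn modnn. Qed.

Lemma lagE a b : a < N -> b < N ->
  lag N a b = if a <= b then b - a else b + N - a.
Proof.
move=> aN bN; rewrite /lag; case: leqP => ab.
  by rewrite -addnBAC // modnDr modn_small //; lia.
by rewrite modn_small //; lia.
Qed.

Lemma modn_succ a : a < N -> a.+1 %% N = if a.+1 == N then 0 else a.+1.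
Proof.
move=> aN; case: eqP => [->|aN']; first exact: modnn.
by rewrite modn_small //; lia.
Qed.

Lemma lag_succ a b : a < N -> b < N ->
  lag N (a.+1 %% N) (b.+1 %% N) = lag N a b.
Proof.
move=> aN bN; rewrite !lagE ?ltn_pmod // !modn_succ //.
by repeat case: ifPn => /=; lia.
Qed.

Lemma lag_shift a b c : a < N -> b < N -> c < N ->
  lag N a b = lag N (lag N c a) (lag N c b).
Proof.
by move=> aN bN cN; rewrite !lagE //; repeat case: ifPn; lia.
Qed.

Lemma lag_addK a b : a < N -> b < N -> (a + lag N a b) %% N = b.
Proof.
move=> aN bN; rewrite /lag modnDmr.
have -> : a + (b + N - a) = b + N by lia.
by rewrite modnDr modn_small.
Qed.

Lemma lag_transport a b c d : a < N -> b < N -> c < N -> d < N ->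
  lag N a b = lag N c d -> (b + lag N a c) %% N = d.
Proof.
move=> aN bN cN dN ab_cd; rewrite /lag modnDmr.
have -> : b + (c + N - a) = (b + N - a) + c by lia.
rewrite -modnDml -/(lag N a b) ab_cd modnDml.
have -> : d + N - c + c = d + N by lia.
by rewrite modnDr modn_small.
Qed.

Lemma cdistE c d : cdist N c d = minn (lag N d c) (lag N c d).
Proof. by []. Qed.

Lemma lag_corner_neq_far n a b c d : a <= n -> b <= n -> c < N -> d < N ->
  2 * n < N -> n < cdist N c d -> lag N a b != lag N c d.
Proof.
move=> an bn cN dN nN; rewrite cdistE !lagE //; try lia.
by repeat case: ifPn; lia.
Qed.

Lemma interval_boundary_far n t1 t2 x y : 1 <= n -> t1 < N -> t2 < N ->
  in_interval N t1 t2 x -> ~~ in_interval N t1 t2 y -> y < N ->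
  ~~ boundary N n t1 t2 y -> n < cdist N x y.
Proof.
move=> n1 t1N t2N /andP[xN xI] yI yN yB; move: xI yI yB.
rewrite /in_interval /boundary /cdist yN /=.
change (0 < lag N t1 x < lag N t1 t2 -> ~~ (0 < lag N t1 y < lag N t1 t2) ->
  ~~ ((lag N y t1 < n) || (lag N t2 y < n)) -> n < minn (lag N y x) (lag N x y)).
rewrite (lag_shift yN xN t1N) (lag_shift xN yN t1N) (lag_shift yN t1N t1N).
rewrite (lag_shift t2N yN t1N) lagnn.
move: (lag_lt t1 x) (lag_lt t1 y) (lag_lt t1 t2).
move: (lag N t1 x) (lag N t1 y) (lag N t1 t2) => X Y L XN YN LN.
by rewrite !lagE //; repeat case: ifPn; lia.
Qed.

End Lag.

Section BlockShift.
Variables (R : realType) (m N : nat).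
Hypotheses (m_gt0 : (0 < m)%N) (N_gt0 : (0 < N)%N).
Implicit Types (k l p q : 'I_(m * N)).

Lemma block_lt k : (k %/ m < N)%N.
Proof. by rewrite ltn_divLR //; have := ltn_ord k; lia. Qed.

Lemma ord_block_eq k l : (k %/ m = l %/ m)%N -> (k %% m = l %% m)%N -> k = l.
Proof.
by move=> kl1 kl2; apply: val_inj; rewrite /= (divn_eq k m) (divn_eq l m) kl1 kl2.
Qed.

Lemma bshift_subproof k : ((k %/ m).+1 %% N * m + k %% m < m * N)%N.
Proof.
have := ltn_pmod (k %/ m).+1 N_gt0; have := ltn_pmod k m_gt0; nia.
Qed.

(* Same position, next block (cyclically). *)
Definition bshift k : 'I_(m * N) := Ordinal (bshift_subproof k).

Lemma block_bshift k : (bshift k %/ m = (k %/ m).+1 %% N)%N.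
Proof. by rewrite /= divnMDl // [X in (_ + X)%N]divn_small ?ltn_pmod // addn0. Qed.

Lemma pos_bshift k : (bshift k %% m = k %% m)%N.
Proof. by rewrite /= modnMDl modn_mod. Qed.

Lemma bshift_inj : injective bshift.
Proof.
move=> k l kl; apply: ord_block_eq; last by rewrite -pos_bshift kl pos_bshift.
have kN := block_lt k; have lN := block_lt l.
have := block_bshift k; rewrite kl block_bshift !modn_succ //.
by repeat case: ifPn; lia.
Qed.

Definition bshift_perm : {perm 'I_(m * N)} := perm bshift_inj.

Lemma Umat_perm : Umat m N = perm_mx bshift_perm :> 'M[R]_(m * N).
Proof.
apply/matrixP => k l; rewrite !mxE permE; congr ((nat_of_bool _)%:R).
apply/idP/eqP => [/andP[/eqP kl1 /eqP kl2]|<-].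
  by apply: ord_block_eq; rewrite ?block_bshift ?pos_bshift.
by rewrite pos_bshift block_bshift !eqxx.
Qed.

Lemma Umat_conjE (A : 'M[R]_(m * N)) p q :
  ((Umat m N)^T *m A *m Umat m N) (bshift p) (bshift q) = A p q.
Proof.
rewrite Umat_perm tr_perm_mx -row_permE -[bshift_perm]invgK -col_permE invgK.
by rewrite !mxE -!(permE bshift_inj) !permK.
Qed.

Lemma Umat_conjP (A : 'M[R]_(m * N)) :
  (Umat m N)^T *m A *m Umat m N = A <-> forall p q, A (bshift p) (bshift q) = A p q.
Proof.
split=> [AU p q|Ash]; first by rewrite -{1}AU Umat_conjE.
apply/matrixP => p q; rewrite -[p](permKV bshift_perm) -[q](permKV bshift_perm).
by rewrite !permE Umat_conjE Ash.
Qed.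

Lemma Umat_conj_invmx (S : 'M[R]_(m * N)) : S \in unitmx ->
  (Umat m N)^T *m S *m Umat m N = S -> (Umat m N)^T *m invmx S *m Umat m N = invmx S.
Proof.
apply: trmx_conj_invmx.
by rewrite Umat_perm tr_perm_mx -perm_mxM mulVg perm_mx1.
Qed.

End BlockShift.

Section Orbits.
Variables (R : realType) (m N : nat).
Hypotheses (m_gt0 : (0 < m)%N) (N_gt0 : (0 < N)%N).
Implicit Types (k l p q : 'I_(m * N)).
Local Notation bshift := (bshift m_gt0 N_gt0).

Lemma iter_bshift r p :
  (iter r bshift p %/ m = (p %/ m + r) %% N)%N /\ (iter r bshift p %% m = p %% m)%N.
Proof.
elim: r => [|r [IHblk IHpos]]; first by rewrite addn0 modn_small // block_lt.
by rewrite iterS block_bshift pos_bshift IHblk IHpos -addn1 modnDml addn1 addnS.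
Qed.

(* [(p, q)] lies in the orbit of [(k, l)] under simultaneous block shifts. *)
Definition orbit_pair k l p q : bool :=
  [&& (p %% m == k %% m)%N, (q %% m == l %% m)%N &
      lag N (p %/ m) (q %/ m) == lag N (k %/ m) (l %/ m)].

Lemma orbit_pairP k l p q : orbit_pair k l p q ->
  exists r, iter r bshift p = k /\ iter r bshift q = l.
Proof.
case/and3P=> /eqP pk /eqP ql /eqP pq_kl; exists (lag N (p %/ m) (k %/ m)).
have [pblk ppos] := iter_bshift (lag N (p %/ m) (k %/ m)) p.
have [qblk qpos] := iter_bshift (lag N (p %/ m) (k %/ m)) q.
split; apply: ord_block_eq; rewrite ?ppos ?qpos //.
  by rewrite pblk lag_addK ?block_lt.
by rewrite qblk (lag_transport _ _ _ _ _ pq_kl) ?block_lt.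
Qed.

Lemma orbit_pair_bshift k l p q : orbit_pair k l (bshift p) (bshift q) = orbit_pair k l p q.
Proof. by rewrite /orbit_pair !pos_bshift !block_bshift lag_succ ?block_lt. Qed.

Lemma circulant_orbit_eq (A : 'M[R]_(m * N)) k l p q :
  (forall p q, A (bshift p) (bshift q) = A p q) -> orbit_pair k l p q -> A p q = A k l.
Proof.
move=> Ash /orbit_pairP[r [<- <-]].
by elim: r => //= r ->; rewrite Ash.
Qed.

Definition orbit_mx k l : 'M[R]_(m * N) :=
  \matrix_(p, q) (orbit_pair k l p q || orbit_pair k l q p)%:R.

Lemma orbit_mx_sym k l : (orbit_mx k l)^T = orbit_mx k l.
Proof. by apply/matrixP => p q; rewrite !mxE orbC. Qed.

Lemma orbit_mx_Umat k l :
  (Umat m N)^T *m orbit_mx k l *m Umat m N = orbit_mx k l.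
Proof. by apply/Umat_conjP => p q; rewrite !mxE !orbit_pair_bshift. Qed.

Lemma orbit_mx_sum_gt0 k l : 0 < \sum_p \sum_q orbit_mx k l q p.
Proof.
have ge0 p q : 0 <= orbit_mx k l p q by rewrite mxE ler0n.
rewrite (bigD1 l) //= (bigD1 k) //= [orbit_mx k l k l]mxE /orbit_pair !eqxx /=.
apply: lt_le_trans ltr01 _; rewrite -addrA lerDl.
by apply: addr_ge0; apply: sumr_ge0 => i _; rewrite ?sumr_ge0.
Qed.

(* [K] is constant, equal to [K k l], on the support of [orbit_mx k l]. *)
Lemma trace_orbit_mx (K : 'M[R]_(m * N)) k l : K^T = K ->
  (forall p q, K (bshift p) (bshift q) = K p q) ->
  \tr (K *m orbit_mx k l) = K k l * \sum_p \sum_q orbit_mx k l q p.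
Proof.
move=> Ksym Ksh; rewrite /mxtrace mulr_sumr; apply: eq_bigr => p _.
rewrite mxE mulr_sumr; apply: eq_bigr => q _; rewrite [orbit_mx k l q p]mxE.
have [qp|_] /= := boolP (orbit_pair k l q p).
  by rewrite -(circulant_orbit_eq Ksh qp) -{1}Ksym mxE.
have [pq|_] /= := boolP (orbit_pair k l p q); last by rewrite !mulr0.
by rewrite (circulant_orbit_eq Ksh pq).
Qed.

End Orbits.

Section Corner.
Variables (R : realType) (m n N : nat).
Hypotheses (m_gt0 : (0 < m)%N) (N_gt0 : (0 < N)%N) (nN : (n < N)%N).

Lemma corner_subproof : (m * n.+1 <= m * N)%N.
Proof. by rewrite leq_pmul2l. Qed.

Lemma Emat_conjE (A : 'M[R]_(m * N)) i j :
  ((Emat m n N)^T *m A *m Emat m n N) i j =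
  A (widen_ord corner_subproof i) (widen_ord corner_subproof j).
Proof.
have Emat_col k (j' : 'I_(m * n.+1)) :
    Emat m n N k j' = (k == widen_ord corner_subproof j')%:R.
  by rewrite mxE.
rewrite mxE (bigD1 (widen_ord corner_subproof j)) //= big1 ?addr0.
  rewrite Emat_col eqxx mulr1 mxE (bigD1 (widen_ord corner_subproof i)) //=.
  rewrite big1 ?addr0 ?mxE ?Emat_col ?eqxx ?mul1r // => k ki.
  by rewrite mxE Emat_col (negPf ki) mul0r.
by move=> k kj; rewrite Emat_col (negPf kj) mulr0.
Qed.

Lemma block_widen_le (i : 'I_(m * n.+1)) : (widen_ord corner_subproof i %/ m <= n)%N.
Proof. by rewrite -ltnS ltn_divLR //=; have := ltn_ord i; lia. Qed.

(* With [2 n < N], no block shift moves a pair at cyclic distance [> n] into the corner. *)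
Lemma orbit_mx_corner (k l : 'I_(m * N)) : (2 * n < N)%N ->
  (n < cdist N (k %/ m) (l %/ m))%N ->
  (Emat m n N)^T *m orbit_mx R k l *m Emat m n N = 0.
Proof.
move=> nN2 far; apply/matrixP => i j; rewrite Emat_conjE !mxE /orbit_pair.
have kN := block_lt m_gt0 N_gt0 k; have lN := block_lt m_gt0 N_gt0 l.
have neq_far a b :=
  lag_corner_neq_far N_gt0 (block_widen_le a) (block_widen_le b) kN lN nN2 far.
by rewrite (negPf (neq_far i j)) (negPf (neq_far j i)) !andbF.
Qed.

End Corner.

Section Reciprocity.
Variables (R : realType) (m N n : nat).
Hypotheses (m_gt0 : (0 < m)%N) (N_gt0 : (0 < N)%N) (n_gt0 : (0 < n)%N).

Lemma supp_delta (P : pred nat) (j : 'I_(m * N)) :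
  P (j %/ m)%N -> supp P (delta_mx j 0 : 'cV[R]_(m * N)).
Proof. by move=> Pj k; rewrite mxE andbT; have [->|_] := eqVneq k j; rewrite ?eqxx. Qed.

Lemma supp_eq0 (P : pred nat) (c : 'cV[R]_(m * N)) (k : 'I_(m * N)) :
  supp P c -> ~~ P (k %/ m)%N -> c k 0 = 0.
Proof. by move=> cP; apply: contraNeq => /cP. Qed.

Lemma inner_delta (S : 'M[R]_(m * N)) x j : S^T = S ->
  inner S x (delta_mx j 0) = (S *m x) j 0.
Proof.
move=> Ssym; rewrite inner_sym // inner_mulmxr (bigD1 j) //= big1 ?addr0.
  by rewrite mxE eqxx mul1r.
by move=> i ij; rewrite mxE (negPf ij) mul0r.
Qed.

(* The residual of [b] is [S]-orthogonal to the boundary [C], hence [S (b - pb)]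
   vanishes on [C]; on the interior it vanishes too, because [S^-1] does not couple
   the interior to the exterior. *)
Lemma banded_inv_reciprocal (S : 'M[R]_(m * N)) : posdef S ->
  banded m N n (invmx S) -> reciprocal m N n S.
Proof.
move=> pS Kband t1 t2 t1N t2N a b pa pb aI bO paC pbC raC rbC.
have uS := posdef_unit pS; have [Ssym _] := pS.
set I := in_interval N t1 t2; set C := boundary N n t1 t2.
pose v := S *m (b - pb).
have vC (j : 'I_(m * N)) : C (j %/ m)%N -> v j 0 = 0.
  by move=> Cj; rewrite -(rbC _ (supp_delta Cj)) inner_delta.
have rbI (i : 'I_(m * N)) : I (i %/ m)%N -> ~~ C (i %/ m)%N -> (b - pb) i 0 = 0.
  move=> Ii Ci; rewrite !mxE (supp_eq0 pbC Ci) (supp_eq0 bO) ?subr0 //.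
  by rewrite /outside_interval -/I Ii andbF.
have vI (i : 'I_(m * N)) : I (i %/ m)%N -> ~~ C (i %/ m)%N -> v i 0 = 0.
  move=> Ii Ci; pose P (k : 'I_(m * N)) := I (k %/ m)%N && ~~ C (k %/ m)%N.
  refine (posdef_restrict_eq0 (P := P) (posdef_invmx pS) _ _ (_ : P i)).
  - move=> {Ii Ci}i j /andP[Ii _] Pj.
    have [Cj|Cj] := boolP (C (j %/ m)%N); first by rewrite vC ?mulr0.
    have Ij : ~~ I (j %/ m)%N by move: Pj; rewrite /P Cj andbT.
    rewrite Kband ?mul0r //.
    exact: (interval_boundary_far N_gt0 n_gt0 t1N t2N Ii Ij (block_lt m_gt0 N_gt0 j) Cj).
  - by move=> {Ii Ci}i /andP[Ii Ci]; rewrite mulKmx // rbI.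
  - by rewrite /P Ii.
rewrite inner_mulmxr big1 // => i _.
have [Ci|Ci] := boolP (C (i %/ m)%N); first by rewrite vC ?mulr0.
have [Ii|Ii] := boolP (I (i %/ m)%N); first by rewrite vI ?mulr0.
by rewrite !mxE (supp_eq0 paC Ci) (supp_eq0 aI Ii) subr0 mul0r.
Qed.

End Reciprocity.

Section MaxEntropy.
Variables (R : realType) (m n N : nat) (S : nat -> 'M[R]_m).

Lemma MEP_feasible_perturb (Sig D : 'M[R]_(m * N)) :
  MEP_feasible m n N S Sig -> D^T = D -> (Emat m n N)^T *m D *m Emat m n N = 0 ->
  (Umat m N)^T *m D *m Umat m N = D ->
  exists2 d : R, 0 < d & forall t, `|t| < d -> MEP_feasible m n N S (Sig + t *: D).
Proof.
move=> [pSig [SigE SigU]] Dsym DE DU; have [d d0 pd] := posdef_perturb pSig Dsym.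
exists d => // t /pd pt; split=> //.
by split; rewrite mulmxDr mulmxDl -scalemxAr -scalemxAl ?DE ?SigE ?DU ?SigU ?scaler0 ?addr0.
Qed.

Lemma MEP_minimizer_trace (Sig D : 'M[R]_(m * N)) : (0 < m * N)%N ->
  MEP_minimizer m n N S Sig -> D^T = D -> (Emat m n N)^T *m D *m Emat m n N = 0 ->
  (Umat m N)^T *m D *m Umat m N = D -> \tr (invmx Sig *m D) = 0.
Proof.
move=> mN0 [fSig Sigmin] Dsym DE DU; have [pSig _] := fSig.
have [d d0 fSigD] := MEP_feasible_perturb fSig Dsym DE DU.
apply: (det_local_max_trace mN0 pSig d0) => t /fSigD fSigt.
have := Sigmin _ fSigt; rewrite lerN2 ler_ln // posrE posdef_det_gt0 //.
by case: fSigt.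
Qed.

Lemma MEP_minimizer_inv_banded (Sig : 'M[R]_(m * N)) : (0 < m)%N -> (2 * n < N)%N ->
  MEP_minimizer m n N S Sig -> banded m N n (invmx Sig).
Proof.
move=> m_gt0 nN2 Sigmin; have N_gt0 : (0 < N)%N by lia.
have [[pSig [_ SigU]] _] := Sigmin; have [Sigsym _] := pSig.
have KU := Umat_conj_invmx m_gt0 N_gt0 (posdef_unit pSig) SigU.
have Ksym : (invmx Sig)^T = invmx Sig by rewrite trmx_inv Sigsym.
have /(Umat_conjP m_gt0 N_gt0) Ksh := KU.
have nN : (n < N)%N by lia.
have mN : (0 < m * N)%N by rewrite muln_gt0 m_gt0.
move=> k l far.
have := MEP_minimizer_trace mN Sigmin (orbit_mx_sym R k l)
  (orbit_mx_corner R m_gt0 N_gt0 nN nN2 far) (orbit_mx_Umat R m_gt0 N_gt0 k l).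
rewrite (trace_orbit_mx _ _ Ksym Ksh) => /eqP.
by rewrite mulf_eq0 (gt_eqF (orbit_mx_sum_gt0 R k l)) orbF => /eqP.
Qed.

End MaxEntropy.

Theorem theorem7 (R : realType) (m n N : nat) (S : nat -> 'M[R]_m)
    (SigO : 'M[R]_(m * N)) :
  (1 <= m)%N -> (1 <= n)%N -> (2 * n < N)%N ->
  MEP_minimizer m n N S SigO ->
  ((invmx SigO)^T = invmx SigO /\
   (@Umat R m N)^T *m invmx SigO *m @Umat R m N = invmx SigO /\
   banded m N n (invmx SigO)) /\
  (posdef SigO /\ (@Umat R m N)^T *m SigO *m @Umat R m N = SigO /\
   reciprocal m N n SigO).
Proof.
move=> m_gt0 n_gt0 nN2 Sigmin; have N_gt0 : (0 < N)%N by lia.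
have [[pSig [_ SigU]] _] := Sigmin; have [Sigsym _] := pSig.
have Kband := MEP_minimizer_inv_banded m_gt0 nN2 Sigmin.
have KU := Umat_conj_invmx m_gt0 N_gt0 (posdef_unit pSig) SigU.
have Ksym : (invmx SigO)^T = invmx SigO by rewrite trmx_inv Sigsym.
by do !split=> //; apply: banded_inv_reciprocal m_gt0 N_gt0 n_gt0 _ pSig Kband.
Qed.
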